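(* Fix an integer $r\ge 2$. For integers $n\ge 1$ and $L\ge 0$ let $$G_2(n,r,L)=\frac{2^{r+1}-1}{2^{r}-1}\left(2^{rL}-1\right)+M_r\!\left(\lfloor n/2^{L}\rfloor\right)-r-1,$$ where $M_r(k)=\binom{k+r}{r}$. Let $L_{op}=L_{op}(n)$ be a value of $L\ge 0$ minimizing $G_2(n,r,L)$, and put $$L^*(n)=\frac{1}{2r}\log_2\frac{2^r-1}{r!\,(2^{r+1}-1)}+\frac{\log_2 n}{2},\qquad K_r=\sqrt{4\,\frac{2^{r+1}-1}{2^r-1}\,\frac{1}{r!}} .$$ Then, asymptotically as $n\to\infty$, $L_{op}$ lies in the interval $[L^*(n)-\tfrac12,\;L^*(n)+\tfrac12]$ up to an error tending to $0$ (i.e. $L^*(n)-\tfrac12-\delta_n\le L_{op}\le L^*(n)+\tfrac12+\delta_n$ with $\delta_n\to 0$), so $L_{op}$ is the integer closest to $L^*(n)$; and for all sufficiently large $n$, $$\frac{1}{\sqrt{2^r}}\,K_r\, n^{r/2}\;<\;G_2(n,r,L_{op})\;<\;\sqrt{2^r}\,K_r\, n^{r/2}.$$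
   Context: $\lfloor x\rfloor$ denotes the integer part of $x$; $M_r(k)=\binom{k+r}{r}$ is the number of monomials of degree at most $k$ in $r$ variables. Interpretation (not needed for the claim): $G_2(n,r,L)$ counts the field multiplications used to evaluate a degree-$n$ polynomial in $\mathbb{F}_2[x_1,\dots,x_r]$ at a point of $\mathbb{F}_{2^m}^r$ by applying $L$ times the decomposition $P=\sum_{i_1,\dots,i_r\in\{0,1\}}x_1^{i_1}\cdots x_r^{i_r}\,P_{i_1,\dots,i_r}(x_1,\dots,x_r)^2$ and evaluating all monomials of degree at most $\lfloor n/2^L\rfloor$ directly. *)

From Stdlib Require Import Reals Arith.
Open Scope R_scope.

(* M_r(k) = binom(k+r, r) : number of monomials of degree <= k in r variables *)
Definition M (r k : nat) : R := Binomial.C (k + r) r.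

Definition log2 (x : R) : R := ln x / ln 2.

Definition G2 (n r L : nat) : R :=
  (2 ^ (r + 1) - 1) / (2 ^ r - 1) * (2 ^ (r * L) - 1)
  + M r (Nat.div n (2 ^ L)) - INR r - 1.

Definition is_Lop (n r L : nat) : Prop := forall L' : nat, G2 n r L <= G2 n r L'.

Definition Lstar (r n : nat) : R :=
  / (2 * INR r) * log2 ((2 ^ r - 1) / (INR (fact r) * (2 ^ (r + 1) - 1)))
  + log2 (INR n) / 2.

Definition K (r : nat) : R :=
  sqrt (4 * ((2 ^ (r + 1) - 1) / (2 ^ r - 1)) * / INR (fact r)).

From Stdlib Require Import Reals Arith Lra Lia Psatz ZArith.
Open Scope R_scope.

(** Write [P = 2^{Lstar}] and [tilt = 2^{r (L - Lstar)}].  The definition of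
    [Lstar] is exactly the balance condition [rho P^{2r} = n^r / r!], where
    [rho = (2^{r+1}-1)/(2^r-1)]; with [peak = rho P^r] one then has
    [rho 2^{rL} = peak * tilt] and [(n/2^L)^r / r! = peak / tilt].
    Since [r! M_r(q)] is [y^r] up to a relative error [r^2 2^r / y] whenever
    [q] is the floor of [y], we get, for [L <= Lstar + 1],
      [G_2 = peak * (tilt + 1/tilt) * (1 +- err) - offset]
    with [err = O(P / n) = O(1/sqrt n)] because [P = kappa sqrt n]; further to
    the right [G_2 >= peak * 2^r - offset].  The function [x + 1/x] is
    minimal at 1 and already [sqrt(2^r) + 1/sqrt(2^r)] at distance 1/2, so
    comparing the optimum with the integer nearest to [Lstar] confines the
    optimal [tilt] to [(1/u, u)] for any [u > sqrt(2^r)], i.e. [L_op] to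
    [Lstar +- (1/2 + o(1))], and yields [2 peak / sqrt(2^r) < G_2(L_op) <
    2 peak sqrt(2^r)], where [2 peak = K_r n^{r/2}]. *)

Lemma fact_add_bounds (k r : nat) :
  (fact k * k ^ r <= fact (k + r) <= fact k * (k + r) ^ r)%nat.
Proof.
  induction r as [|r [IHlo IHhi]].
  - rewrite Nat.add_0_r; simpl; lia.
  - replace (k + S r)%nat with (S (k + r)) by lia.
    change (fact (S (k + r))) with (S (k + r) * fact (k + r))%nat.
    rewrite !Nat.pow_succ_r'.
    assert (Hmono : ((k + r) ^ r <= S (k + r) ^ r)%nat) by (apply Nat.pow_le_mono_l; lia).
    split.
    + rewrite Nat.mul_assoc, (Nat.mul_comm (fact k) k), <- Nat.mul_assoc.
      apply Nat.mul_le_mono; lia.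
    + rewrite Nat.mul_assoc, (Nat.mul_comm (fact k) (S (k + r))), <- Nat.mul_assoc.
      apply Nat.mul_le_mono_l. apply (Nat.le_trans _ _ _ IHhi).
      apply Nat.mul_le_mono_l; exact Hmono.
Qed.

Lemma binomial_power_bounds (r q : nat) :
  INR q ^ r <= INR (fact r) * Binomial.C (q + r) r <= (INR q + INR r) ^ r.
Proof.
  unfold Binomial.C. replace (q + r - r)%nat with q by lia.
  assert (Hr : 0 < INR (fact r)) by (apply lt_0_INR, lt_O_fact).
  assert (Hq : 0 < INR (fact q)) by (apply lt_0_INR, lt_O_fact).
  replace (INR (fact r) * (INR (fact (q + r)) / (INR (fact r) * INR (fact q))))
    with (INR (fact (q + r)) / INR (fact q)) by (field; lra).
  destruct (fact_add_bounds q r) as [Hlo Hhi].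
  apply le_INR in Hlo, Hhi. rewrite mult_INR, pow_INR in Hlo, Hhi.
  rewrite plus_INR in Hhi.
  split; [apply Rmult_le_reg_r with (INR (fact q)) | apply Rmult_le_reg_r with (INR (fact q))];
    try lra; unfold Rdiv; rewrite Rmult_assoc, Rinv_l; lra.
Qed.

Lemma bernoulli_lower (x : R) (n : nat) : 0 <= x <= 1 -> 1 - INR n * x <= (1 - x) ^ n.
Proof.
  intros Hx. induction n as [|n IH]; [simpl; lra|].
  rewrite S_INR; simpl. assert (0 <= (1 - x) ^ n) by (apply pow_le; lra).
  assert (0 <= INR n) by apply pos_INR. nra.
Qed.

Lemma bernoulli_upper (x : R) (n : nat) : 0 <= x -> INR n * x <= 1 ->
  (1 + x) ^ n <= 1 + INR n * x * 2 ^ n.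
Proof.
  intros Hx. induction n as [|n IH]; intros Hnx; [simpl; lra|].
  rewrite S_INR in *; simpl.
  assert (0 <= INR n) by apply pos_INR.
  assert (IH' : (1 + x) ^ n <= 1 + INR n * x * 2 ^ n) by (apply IH; nra).
  assert (H2n : 1 <= 2 ^ n) by (apply pow_R1_Rle; lra).
  assert (Hstep : (1 + x) * (1 + x) ^ n <= (1 + x) * (1 + INR n * x * 2 ^ n))
    by (apply Rmult_le_compat_l; lra).
  assert (0 <= x * 2 ^ n) by nra.
  assert (x * (INR n * x) * 2 ^ n <= x * 2 ^ n) by nra.
  assert (0 <= INR n * x * 2 ^ n) by (apply Rmult_le_pos; nra).
  nra.
Qed.

Definition binom_err (r : nat) : R := INR r ^ 2 * 2 ^ r.

Lemma binom_err_ge (r : nat) : (1 <= r)%nat -> INR r <= INR r ^ 2 <= binom_err r.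
Proof.
  intros hr. assert (HrR : 1 <= INR r) by (apply (le_INR 1); lia).
  assert (H2r : 1 <= 2 ^ r) by (apply pow_R1_Rle; lra).
  unfold binom_err. simpl. nra.
Qed.

Lemma binomial_near_power (r q : nat) (y : R) :
  (1 <= r)%nat -> binom_err r <= y -> y - 1 <= INR q <= y ->
  y ^ r * (1 - binom_err r / y) <= INR (fact r) * Binomial.C (q + r) r
  <= y ^ r * (1 + binom_err r / y).
Proof.
  intros hr Hy [Hqlo Hqhi].
  destruct (binom_err_ge r hr) as [Hr Hr2].
  assert (HrR : 1 <= INR r) by (apply (le_INR 1); lia).
  assert (Hy1 : 1 <= y) by lra.
  assert (Hyr : 0 <= y ^ r) by (apply pow_le; lra).
  assert (Hinv : 0 < / y <= 1) by (split; [apply Rinv_0_lt_compat; lra |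
    rewrite <- Rinv_1; apply Rinv_le_contravar; lra]).
  assert (Herr : INR r ^ 2 * / y <= binom_err r / y) by (apply Rmult_le_compat_r; lra).
  assert (Herr1 : binom_err r / y <= 1).
  { unfold Rdiv. apply Rmult_le_reg_r with y; [lra|].
    rewrite Rmult_assoc, Rinv_l; lra. }
  destruct (binomial_power_bounds r q) as [Blo Bhi].
  split.
  - (* [(y - 1)^r = y^r (1 - 1/y)^r >= y^r (1 - r/y)] *)
    assert (Hfac : (y - 1) ^ r = y ^ r * (1 - / y) ^ r)
      by (rewrite <- Rpow_mult_distr; f_equal; field; lra).
    assert (Hbern := bernoulli_lower (/ y) r ltac:(lra)).
    assert ((y - 1) ^ r <= INR q ^ r) by (apply pow_incr; lra).
    assert (y ^ r * (1 - binom_err r / y) <= y ^ r * (1 - / y) ^ r).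
    { apply Rmult_le_compat_l; [lra|]. simpl in Herr. nra. }
    lra.
  - (* [(y + r)^r = y^r (1 + r/y)^r <= y^r (1 + r^2 2^r / y)] *)
    assert (Hfac : (y + INR r) ^ r = y ^ r * (1 + INR r * / y) ^ r)
      by (rewrite <- Rpow_mult_distr; f_equal; field; lra).
    assert (Hbern : (1 + INR r * / y) ^ r <= 1 + INR r * (INR r * / y) * 2 ^ r).
    { apply bernoulli_upper; [nra|]. simpl in Herr. nra. }
    assert ((INR q + INR r) ^ r <= (y + INR r) ^ r)
      by (apply pow_incr; split; [pose proof (pos_INR q)|]; lra).
    assert (y ^ r * (1 + INR r * / y) ^ r <= y ^ r * (1 + binom_err r / y)).
    { apply Rmult_le_compat_l; [lra|]. unfold binom_err, Rdiv. simpl in *. nra. }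
    lra.
Qed.

Lemma div_pow2_bounds (n L : nat) :
  INR n / 2 ^ L - 1 <= INR (Nat.div n (2 ^ L)) <= INR n / 2 ^ L.
Proof.
  assert (Hp : (2 ^ L <> 0)%nat) by (apply Nat.pow_nonzero; lia).
  pose proof (Nat.div_mod n (2 ^ L) Hp) as Hd.
  pose proof (Nat.mod_upper_bound n (2 ^ L) Hp) as Hm.
  set (q := Nat.div n (2 ^ L)) in *. set (m := (n mod 2 ^ L)%nat) in *.
  assert (HX : 0 < 2 ^ L) by (apply pow_lt; lra).
  apply lt_INR in Hm. rewrite pow_INR in Hm.
  rewrite Hd, plus_INR, mult_INR, pow_INR. simpl INR in *.
  replace (1 + 1) with 2 in * by ring.
  assert (E : (2 ^ L * INR q + INR m) / 2 ^ L = INR q + INR m / 2 ^ L) by (field; lra).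
  assert (0 <= INR m / 2 ^ L < 1).
  { pose proof (pos_INR m). split.
    - apply Rmult_le_pos; [lra | left; apply Rinv_0_lt_compat; lra].
    - apply Rmult_lt_reg_r with (2 ^ L); [lra|].
      unfold Rdiv. rewrite Rmult_assoc, Rinv_l; lra. }
  rewrite E. lra.
Qed.

(** The constants of the problem: [rho r = (2^{r+1}-1)/(2^r-1)] multiplies
    [2^{rL}] in [G_2], and [Qc r = (2^r-1)/(r!(2^{r+1}-1))] enters [Lstar];
    they are tied by [rho r * Qc r * r! = 1]. *)
Definition rho (r : nat) : R := (2 ^ (r + 1) - 1) / (2 ^ r - 1).
Definition Qc (r : nat) : R := (2 ^ r - 1) / (INR (fact r) * (2 ^ (r + 1) - 1)).

Lemma rho_Qc (r : nat) : (1 <= r)%nat ->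
  0 < rho r /\ 0 < Qc r /\ rho r * Qc r * INR (fact r) = 1.
Proof.
  intros hr.
  assert (H2 : 2 <= 2 ^ r).
  { destruct r as [|r]; [lia|]. simpl. pose proof (pow_R1_Rle 2 r ltac:(lra)). lra. }
  assert (E : 2 ^ (r + 1) = 2 * 2 ^ r) by (rewrite pow_add; simpl; ring).
  assert (Hf : 0 < INR (fact r)) by (apply lt_0_INR, lt_O_fact).
  unfold rho, Qc. rewrite E. repeat split.
  - apply Rdiv_lt_0_compat; lra.
  - apply Rdiv_lt_0_compat; [lra|]. apply Rmult_lt_0_compat; lra.
  - field. split; lra.
Qed.

Lemma ln2_pos : 0 < ln 2.
Proof. pose proof ln_lt_2; lra. Qed.

Lemma Rpower2_log2 (a x : R) : Rpower 2 (a * log2 x) = Rpower x a.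
Proof. unfold Rpower, log2. f_equal. pose proof ln2_pos. field. lra. Qed.

Lemma Rpower2_le (x y : R) : x <= y -> Rpower 2 x <= Rpower 2 y.
Proof. apply Rle_Rpower; lra. Qed.

(** [2^{r/2} = sqrt (2^r)]: the value of [tilt] at distance 1/2 from [Lstar]. *)
Lemma Rpower2_half (r : nat) : Rpower 2 (INR r * / 2) = sqrt (2 ^ r).
Proof. rewrite <- Rpower_mult, Rpower_sqrt, Rpower_pow; try lra. apply exp_pos. Qed.

Definition kappa (r : nat) : R := Rpower (Qc r) (/ (2 * INR r)).
Definition scale (r n : nat) : R := Rpower 2 (Lstar r n).

Lemma scale_sqrt (r n : nat) : (1 <= n)%nat -> scale r n = kappa r * sqrt (INR n).
Proof.
  intros hn. assert (HnR : 0 < INR n) by (apply lt_0_INR; lia).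
  unfold scale, Lstar, kappa. fold (Qc r).
  replace (log2 (INR n) / 2) with (/ 2 * log2 (INR n)) by (unfold Rdiv; ring).
  rewrite Rpower_plus, !Rpower2_log2, Rpower_sqrt by exact HnR. reflexivity.
Qed.

Lemma kappa_pos (r : nat) : 0 < kappa r.
Proof. apply exp_pos. Qed.

Lemma scale_pos (r n : nat) : 0 < scale r n.
Proof. apply exp_pos. Qed.

Lemma kappa_pow (r : nat) : (1 <= r)%nat -> kappa r ^ (2 * r) = Qc r.
Proof.
  intros hr. destruct (rho_Qc r hr) as [_ [HQ _]].
  assert (HrR : 1 <= INR r) by (apply (le_INR 1); lia).
  rewrite <- Rpower_pow by apply kappa_pos. unfold kappa.
  rewrite Rpower_mult, mult_INR. simpl INR.
  replace (/ (2 * INR r) * ((1 + 1) * INR r)) with 1 by (field; lra).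
  apply Rpower_1; exact HQ.
Qed.

(** Defining identity of [Lstar]: [rho * (P^r)^2 = n^r / r!], i.e. the two
    terms [rho 2^{rL}] and [(n/2^L)^r/r!] of [G_2] balance at [L = Lstar]. *)
Lemma scale_balance (r n : nat) : (1 <= r)%nat -> (1 <= n)%nat ->
  rho r * (scale r n ^ r) ^ 2 = INR n ^ r / INR (fact r).
Proof.
  intros hr hn. destruct (rho_Qc r hr) as [Hrho [HQ HrQ]].
  assert (Hf : 0 < INR (fact r)) by (apply lt_0_INR, lt_O_fact).
  assert (Hn : 0 <= INR n) by apply pos_INR.
  rewrite scale_sqrt, <- pow_mult, Rpow_mult_distr, Nat.mul_comm, kappa_pow, pow_mult
    by assumption.
  replace (sqrt (INR n) ^ 2) with (INR n) by (simpl; rewrite Rmult_1_r, sqrt_sqrt; lra).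
  apply Rmult_eq_reg_r with (INR (fact r)); [|lra].
  replace (rho r * (Qc r * INR n ^ r) * INR (fact r))
    with (rho r * Qc r * INR (fact r) * INR n ^ r) by ring.
  rewrite HrQ. field. lra.
Qed.

(** The normalized quantities: [peak = rho P^r] is the common size of both
    terms at [L = Lstar], [tilt = 2^{r(L-Lstar)}] measures the distance to [Lstar],
    [offset] collects the constants, and [err] is the relative error of the
    binomial estimate, which tends to 0 since [P ~ sqrt n]. *)
Definition peak (r n : nat) : R := rho r * scale r n ^ r.
Definition tilt (r n L : nat) : R := Rpower 2 (INR r * (INR L - Lstar r n)).
Definition offset (r : nat) : R := rho r + INR r + 1.
Definition err (r n : nat) : R := binom_err r * (2 * scale r n / INR n).

Lemma tilt_pos (r n L : nat) : 0 < tilt r n L.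
Proof. apply exp_pos. Qed.

Lemma peak_pos (r n : nat) : (1 <= r)%nat -> 0 < peak r n.
Proof.
  intros hr. destruct (rho_Qc r hr) as [Hrho _].
  unfold peak. apply Rmult_lt_0_compat; [lra|]. apply pow_lt, scale_pos.
Qed.

Lemma err_nonneg (r n : nat) : (1 <= n)%nat -> 0 <= err r n.
Proof.
  intros hn. assert (0 < INR n) by (apply lt_0_INR; lia).
  pose proof (scale_pos r n). assert (0 <= binom_err r).
  { unfold binom_err. apply Rmult_le_pos; apply pow_le; [apply pos_INR | lra]. }
  unfold err. apply Rmult_le_pos; [lra|].
  apply Rmult_le_pos; [lra | left; apply Rinv_0_lt_compat; lra].
Qed.

Lemma pow2_split (r n L : nat) : 2 ^ L = scale r n * Rpower 2 (INR L - Lstar r n).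
Proof.
  unfold scale. rewrite <- Rpower_plus, <- Rpower_pow by lra. f_equal. ring.
Qed.

Lemma tilt_pow (r n L : nat) : tilt r n L = Rpower 2 (INR L - Lstar r n) ^ r.
Proof.
  unfold tilt. rewrite <- Rpower_pow, Rpower_mult by apply exp_pos. f_equal. ring.
Qed.

Lemma pow2_rL_split (r n L : nat) : 2 ^ (r * L) = scale r n ^ r * tilt r n L.
Proof.
  rewrite Nat.mul_comm, pow_mult, (pow2_split r n L), Rpow_mult_distr, tilt_pow.
  reflexivity.
Qed.

Lemma G2_split (r n L : nat) :
  G2 n r L = peak r n * tilt r n L + Binomial.C (Nat.div n (2 ^ L) + r) r - offset r.
Proof.
  unfold G2, M. fold (rho r). rewrite (pow2_rL_split r n L). unfold peak, offset. ring.
Qed.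

Lemma ratio_power (r n L : nat) : (1 <= r)%nat -> (1 <= n)%nat ->
  (INR n / 2 ^ L) ^ r / INR (fact r) = peak r n / tilt r n L.
Proof.
  intros hr hn.
  assert (Hf : 0 < INR (fact r)) by (apply lt_0_INR, lt_O_fact).
  assert (HP : 0 < scale r n ^ r) by (apply pow_lt, scale_pos).
  pose proof (tilt_pos r n L) as HE.
  assert (Hn : INR n ^ r = rho r * (scale r n ^ r) ^ 2 * INR (fact r)).
  { rewrite (scale_balance r n hr hn). field. lra. }
  unfold Rdiv. rewrite Rpow_mult_distr, pow_inv, <- pow_mult, Nat.mul_comm,
    (pow2_rL_split r n L), Hn.
  unfold peak. field. repeat split; lra.
Qed.

Lemma binomial_near_peak (r n L : nat) : (1 <= r)%nat -> (1 <= n)%nat ->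
  INR L - Lstar r n <= 1 -> err r n <= 1 ->
  peak r n / tilt r n L * (1 - err r n) <= Binomial.C (Nat.div n (2 ^ L) + r) r
  <= peak r n / tilt r n L * (1 + err r n).
Proof.
  intros hr hn ht herr.
  assert (Hf : 0 < INR (fact r)) by (apply lt_0_INR, lt_O_fact).
  assert (HnR : 0 < INR n) by (apply lt_0_INR; lia).
  assert (HX : 0 < 2 ^ L) by (apply pow_lt; lra).
  assert (HB : 0 <= binom_err r) by (pose proof (binom_err_ge r hr); pose proof (pos_INR r); nra).
  pose proof (scale_pos r n) as HP.
  set (y := INR n / 2 ^ L).
  assert (Hy : 0 < y) by (apply Rdiv_lt_0_compat; lra).
  (* [2^L <= 2 P], hence [binom_err r / y <= err r n] *)
  assert (HX2 : 2 ^ L <= 2 * scale r n).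
  { rewrite (pow2_split r n L).
    assert (Rpower 2 (INR L - Lstar r n) <= 2)
      by (rewrite <- (Rpower_1 2) at 2 by lra; apply Rpower2_le; exact ht).
    nra. }
  assert (Hrel : binom_err r / y <= err r n).
  { unfold y, err. replace (binom_err r / (INR n / 2 ^ L)) with (binom_err r * (2 ^ L / INR n))
      by (field; lra).
    apply Rmult_le_compat_l; [exact HB|]. unfold Rdiv.
    apply Rmult_le_compat_r; [left; apply Rinv_0_lt_compat|]; lra. }
  assert (Hyb : binom_err r <= y).
  { assert (binom_err r / y * y <= 1 * y) by (apply Rmult_le_compat_r; lra).
    unfold Rdiv in H. rewrite Rmult_assoc, Rinv_l, Rmult_1_r in H; lra. }
  destruct (binomial_near_power r (Nat.div n (2 ^ L)) y hr Hyb (div_pow2_bounds n L))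
    as [Blo Bhi].
  rewrite <- (ratio_power r n L hr hn). fold y.
  assert (Hyr : 0 <= y ^ r) by (apply pow_le; lra).
  split; apply Rmult_le_reg_l with (INR (fact r)); try lra;
    replace (INR (fact r) * (y ^ r / INR (fact r) * (1 - err r n)))
      with (y ^ r * (1 - err r n)) by (field; lra);
    replace (INR (fact r) * (y ^ r / INR (fact r) * (1 + err r n)))
      with (y ^ r * (1 + err r n)) by (field; lra).
  - assert (y ^ r * (1 - err r n) <= y ^ r * (1 - binom_err r / y))
      by (apply Rmult_le_compat_l; lra). lra.
  - assert (y ^ r * (1 + binom_err r / y) <= y ^ r * (1 + err r n))
      by (apply Rmult_le_compat_l; lra). lra.
Qed.

(** [x + 1/x]: the shape of [G_2] as a function of [tilt]. *)
Definition recip_sum (x : R) : R := x + / x.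

Lemma recip_sum_diff (x u : R) : 0 < x -> 0 < u ->
  recip_sum x - recip_sum u = (x - u) * (x - / u) / x.
Proof. intros hx hu. unfold recip_sum. field. split; lra. Qed.

Lemma recip_sum_ge2 (x : R) : 0 < x -> 2 <= recip_sum x.
Proof.
  intros hx. pose proof (recip_sum_diff x 1 hx ltac:(lra)) as D.
  unfold recip_sum at 2 in D. rewrite Rinv_1 in D.
  assert (0 <= (x - 1) * (x - 1) / x)
    by (unfold Rdiv; apply Rmult_le_pos; [apply Rle_0_sqr | left; apply Rinv_0_lt_compat; lra]).
  lra.
Qed.

Lemma recip_sum_inside (x u : R) : 1 <= u -> / u <= x <= u -> recip_sum x <= recip_sum u.
Proof.
  intros hu hx. assert (0 < / u) by (apply Rinv_0_lt_compat; lra).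
  pose proof (recip_sum_diff x u ltac:(lra) ltac:(lra)) as D.
  assert (Hx : 0 < / x) by (apply Rinv_0_lt_compat; lra).
  assert (Hprod : (x - u) * (x - / u) <= 0) by nra.
  assert ((x - u) * (x - / u) * / x <= 0) by nra.
  unfold Rdiv in D. lra.
Qed.

Lemma recip_sum_window (x u : R) : 1 <= u -> 0 < x ->
  recip_sum x < recip_sum u -> / u < x < u.
Proof.
  intros hu hx hlt. assert (0 < / u) by (apply Rinv_0_lt_compat; lra).
  assert (/ u <= 1) by (rewrite <- Rinv_1; apply Rinv_le_contravar; lra).
  pose proof (recip_sum_diff x u hx ltac:(lra)) as D.
  assert (Hneg : (x - u) * (x - / u) < 0).
  { apply Rnot_le_lt. intro Hc.
    assert (0 <= (x - u) * (x - / u) / x)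
      by (unfold Rdiv; apply Rmult_le_pos; [lra | left; apply Rinv_0_lt_compat; lra]).
    lra. }
  nra.
Qed.

Lemma recip_sum_lt (u v : R) : 1 <= u < v -> recip_sum u < recip_sum v.
Proof.
  intros [hu huv]. assert (/ u <= 1) by (rewrite <- Rinv_1; apply Rinv_le_contravar; lra).
  pose proof (recip_sum_diff v u ltac:(lra) ltac:(lra)) as D.
  assert (0 < (v - u) * (v - / u) / v).
  { unfold Rdiv; apply Rmult_lt_0_compat; [nra | apply Rinv_0_lt_compat; lra]. }
  lra.
Qed.

Lemma G2_estimate (r n L : nat) : (1 <= r)%nat -> (1 <= n)%nat ->
  INR L - Lstar r n <= 1 -> err r n <= 1 ->
  peak r n * (1 - err r n) * recip_sum (tilt r n L) - offset r <= G2 n r L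
  <= peak r n * (1 + err r n) * recip_sum (tilt r n L) - offset r.
Proof.
  intros hr hn ht herr.
  destruct (binomial_near_peak r n L hr hn ht herr) as [Mlo Mhi].
  pose proof (peak_pos r n hr). pose proof (tilt_pos r n L).
  pose proof (err_nonneg r n hn).
  rewrite G2_split. unfold recip_sum, Rdiv in *.
  assert (0 <= peak r n * tilt r n L * err r n) by (apply Rmult_le_pos; nra).
  split; nra.
Qed.

Lemma G2_ge_tilt (r n L : nat) : peak r n * tilt r n L - offset r <= G2 n r L.
Proof.
  rewrite G2_split.
  destruct (binomial_power_bounds r (Nat.div n (2 ^ L))) as [Hlo _].
  assert (Hf : 0 < INR (fact r)) by (apply lt_0_INR, lt_O_fact).
  assert (0 <= INR (Nat.div n (2 ^ L)) ^ r) by (apply pow_le, pos_INR).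
  assert (0 <= Binomial.C (Nat.div n (2 ^ L) + r) r) by nra.
  lra.
Qed.

(** Lower bound valid for every [L]: near [Lstar] use [G2_estimate],
    far to the right the term [peak * tilt >= peak * 2^r] alone suffices. *)
Lemma G2_lower (r n L : nat) : (1 <= r)%nat -> (1 <= n)%nat -> err r n <= 1 ->
  peak r n * Rmin ((1 - err r n) * recip_sum (tilt r n L)) (2 ^ r) - offset r
  <= G2 n r L.
Proof.
  intros hr hn herr. pose proof (peak_pos r n hr).
  destruct (Rle_lt_dec (INR L - Lstar r n) 1) as [ht|ht].
  - destruct (G2_estimate r n L hr hn ht herr) as [Hlo _].
    assert (peak r n * Rmin ((1 - err r n) * recip_sum (tilt r n L)) (2 ^ r)
            <= peak r n * ((1 - err r n) * recip_sum (tilt r n L)))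
      by (apply Rmult_le_compat_l; [lra | apply Rmin_l]).
    lra.
  - assert (Htilt : 2 ^ r <= tilt r n L).
    { unfold tilt. rewrite <- Rpower_pow by lra. apply Rpower2_le.
      pose proof (le_INR 1 r hr). simpl in *. nra. }
    assert (peak r n * Rmin ((1 - err r n) * recip_sum (tilt r n L)) (2 ^ r)
            <= peak r n * tilt r n L).
    { apply Rmult_le_compat_l; [lra|]. apply Rle_trans with (2 ^ r); [apply Rmin_r | lra]. }
    pose proof (G2_ge_tilt r n L). lra.
Qed.

(** Upper bound within half a unit of [Lstar], where [tilt] lies in
    [[1/sqrt(2^r), sqrt(2^r)]]. *)
Lemma G2_upper_near (r n L : nat) : (1 <= r)%nat -> (1 <= n)%nat -> err r n <= 1 ->
  Lstar r n - / 2 <= INR L <= Lstar r n + / 2 ->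
  G2 n r L <= peak r n * (1 + err r n) * recip_sum (sqrt (2 ^ r)) - offset r.
Proof.
  intros hr hn herr hL.
  destruct (G2_estimate r n L hr hn ltac:(lra) herr) as [_ Hhi].
  assert (HrR : 0 <= INR r) by apply pos_INR.
  assert (Hb : 1 <= sqrt (2 ^ r))
    by (rewrite <- sqrt_1; apply sqrt_le_1_alt, pow_R1_Rle; lra).
  assert (Hin : / sqrt (2 ^ r) <= tilt r n L <= sqrt (2 ^ r)).
  { rewrite <- !Rpower2_half, <- Rpower_Ropp. unfold tilt.
    split; apply Rpower2_le; nra. }
  pose proof (recip_sum_inside _ _ Hb Hin).
  pose proof (peak_pos r n hr). pose proof (err_nonneg r n hn).
  assert (peak r n * (1 + err r n) * recip_sum (tilt r n L)
          <= peak r n * (1 + err r n) * recip_sum (sqrt (2 ^ r)))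
    by (apply Rmult_le_compat_l; nra).
  lra.
Qed.

Lemma nat_near (x : R) : - / 2 <= x -> exists L : nat, x - / 2 <= INR L <= x + / 2.
Proof.
  intros hx. destruct (archimed (x - / 2)) as [H1 H2].
  assert (Hz : (0 <= up (x - / 2))%Z).
  { assert (Hlt : IZR (-1) < IZR (up (x - / 2))) by (simpl; lra).
    apply lt_IZR in Hlt. lia. }
  exists (Z.to_nat (up (x - / 2))).
  rewrite INR_IZR_INZ, Z2Nat.id by exact Hz. lra.
Qed.

(** The optimum is squeezed: it cannot exceed the value at the integer
    [L0] nearest to [Lstar], and it is bounded below by [G2_lower]. *)
Lemma optimum_bracket (r n Lopt : nat) : (1 <= r)%nat -> (1 <= n)%nat -> err r n <= 1 ->
  - / 2 <= Lstar r n -> is_Lop n r Lopt ->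
  peak r n * Rmin ((1 - err r n) * recip_sum (tilt r n Lopt)) (2 ^ r) - offset r
  <= G2 n r Lopt
  <= peak r n * (1 + err r n) * recip_sum (sqrt (2 ^ r)) - offset r.
Proof.
  intros hr hn herr hL hopt.
  split; [exact (G2_lower r n Lopt hr hn herr)|].
  destruct (nat_near (Lstar r n) hL) as [L0 HL0].
  apply Rle_trans with (G2 n r L0); [apply hopt|].
  exact (G2_upper_near r n L0 hr hn herr HL0).
Qed.

Lemma sqrt_pow2 (r : nat) : (2 <= r)%nat -> 2 <= sqrt (2 ^ r) /\ sqrt (2 ^ r) * sqrt (2 ^ r) = 2 ^ r.
Proof.
  intros hr. assert (H4 : 4 <= 2 ^ r).
  { replace 4 with (2 ^ 2) by (simpl; ring). apply Rle_pow; [lra | exact hr]. }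
  split; [|apply sqrt_sqrt; lra].
  replace 2 with (sqrt 4) at 1 by (replace 4 with (2 * 2) by ring; apply sqrt_square; lra).
  apply sqrt_le_1_alt; exact H4.
Qed.

Lemma margin_at_half (b eta : R) : 2 <= b -> 0 <= eta <= / 4 -> (1 + eta) * recip_sum b < 2 * b.
Proof.
  intros hb heta. unfold recip_sum.
  assert (/ b <= / 2) by (apply Rinv_le_contravar; lra).
  assert (0 < / b) by (apply Rinv_0_lt_compat; lra).
  nra.
Qed.

Lemma small_margin (a c : R) : 0 < a < c ->
  exists eta : R, 0 < eta <= / 4 /\ (1 + eta) * a < (1 - eta) * c.
Proof.
  intros [ha hac]. exists (Rmin (/ 4) ((c - a) / (2 * (a + c)))).
  assert (Hq : 0 < (c - a) / (2 * (a + c))) by (apply Rdiv_lt_0_compat; lra).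
  assert (Hle : Rmin (/ 4) ((c - a) / (2 * (a + c))) <= (c - a) / (2 * (a + c))) by apply Rmin_r.
  assert (Hprod : (c - a) / (2 * (a + c)) * (a + c) = (c - a) / 2) by (field; lra).
  split; [split; [apply Rmin_pos; lra | apply Rmin_l]|].
  assert (Rmin (/ 4) ((c - a) / (2 * (a + c))) * (a + c) <= (c - a) / 2)
    by (rewrite <- Hprod; apply Rmult_le_compat_r; lra).
  nra.
Qed.

Lemma optimum_tilt_window (r n Lopt : nat) (eta u : R) :
  (2 <= r)%nat -> (1 <= n)%nat -> err r n <= eta <= / 4 -> - / 2 <= Lstar r n ->
  is_Lop n r Lopt -> 1 <= u ->
  (1 + eta) * recip_sum (sqrt (2 ^ r)) < (1 - eta) * recip_sum u ->
  / u < tilt r n Lopt < u.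
Proof.
  intros hr hn herr hL hopt hu hmargin.
  assert (hr1 : (1 <= r)%nat) by lia.
  pose proof (err_nonneg r n hn) as Herr0.
  destruct (optimum_bracket r n Lopt hr1 hn ltac:(lra) hL hopt) as [Hlo Hhi].
  destruct (sqrt_pow2 r hr) as [Hb Hbb].
  pose proof (peak_pos r n hr1) as Hpeak.
  pose proof (tilt_pos r n Lopt) as Ht.
  pose proof (recip_sum_ge2 _ Ht) as Hf2.
  pose proof (margin_at_half _ _ Hb (conj Herr0 (Rle_trans _ _ _ (proj1 herr) (proj2 herr)))).
  set (b := sqrt (2 ^ r)) in *.
  set (m := Rmin ((1 - err r n) * recip_sum (tilt r n Lopt)) (2 ^ r)) in *.
  assert (Hm : m <= (1 + err r n) * recip_sum b).
  { apply Rmult_le_reg_l with (peak r n); [exact Hpeak|]. lra. }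
  assert (Hfb : (1 + err r n) * recip_sum b <= (1 + eta) * recip_sum b)
    by (apply Rmult_le_compat_r; [pose proof (recip_sum_ge2 b ltac:(lra))|]; lra).
  (* the minimum is attained by the first term, as the second is [b^2 >= 2b] *)
  assert (Hfirst : m = (1 - err r n) * recip_sum (tilt r n Lopt)).
  { unfold m in Hm |- *. apply Rmin_left. apply Rnot_lt_le. intro Hc.
    rewrite (Rmin_right _ _ (Rlt_le _ _ Hc)) in Hm. nra. }
  apply recip_sum_window; [exact hu | exact Ht|].
  assert ((1 - eta) * recip_sum (tilt r n Lopt) < (1 - eta) * recip_sum u).
  { apply Rle_lt_trans with ((1 - err r n) * recip_sum (tilt r n Lopt)); [|lra].
    apply Rmult_le_compat_r; lra. }
  apply Rmult_lt_reg_l with (1 - eta); lra.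
Qed.

Lemma tilt_window_dist (r n L : nat) (a : R) : (1 <= r)%nat ->
  / Rpower 2 (INR r * a) < tilt r n L < Rpower 2 (INR r * a) ->
  Rabs (INR L - Lstar r n) < a.
Proof.
  intros hr [Hlo Hhi]. rewrite <- Rpower_Ropp in Hlo. unfold tilt in *.
  assert (HrR : 1 <= INR r) by (apply (le_INR 1); lia).
  assert (H1 : INR r * (INR L - Lstar r n) < INR r * a).
  { apply Rnot_le_lt. intro Hc. apply Rpower2_le in Hc. lra. }
  assert (H2 : - (INR r * a) < INR r * (INR L - Lstar r n)).
  { apply Rnot_le_lt. intro Hc. apply Rpower2_le in Hc. lra. }
  apply Rabs_def1; nra.
Qed.

Lemma G2_lower_uniform (r n L : nat) : (1 <= r)%nat -> (1 <= n)%nat -> err r n <= / 4 ->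
  3 / 2 * peak r n - offset r <= G2 n r L.
Proof.
  intros hr hn herr.
  pose proof (G2_lower r n L hr hn ltac:(lra)) as Hlo.
  pose proof (recip_sum_ge2 _ (tilt_pos r n L)).
  pose proof (err_nonneg r n hn). pose proof (peak_pos r n hr).
  assert (H2r : 2 <= 2 ^ r).
  { destruct r as [|r]; [lia|]. simpl. pose proof (pow_R1_Rle 2 r ltac:(lra)). lra. }
  assert (3 / 2 <= Rmin ((1 - err r n) * recip_sum (tilt r n L)) (2 ^ r))
    by (apply Rmin_glb; nra).
  assert (3 / 2 * peak r n <= Rmin ((1 - err r n) * recip_sum (tilt r n L)) (2 ^ r) * peak r n)
    by (apply Rmult_le_compat_r; lra).
  lra.
Qed.

Lemma optimum_upper (r n Lopt : nat) : (2 <= r)%nat -> (1 <= n)%nat -> err r n <= / 4 ->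
  - / 2 <= Lstar r n -> is_Lop n r Lopt ->
  G2 n r Lopt < sqrt (2 ^ r) * (2 * peak r n).
Proof.
  intros hr hn herr hL hopt. assert (hr1 : (1 <= r)%nat) by lia.
  destruct (optimum_bracket r n Lopt hr1 hn ltac:(lra) hL hopt) as [_ Hhi].
  destruct (sqrt_pow2 r hr) as [Hb _].
  pose proof (err_nonneg r n hn). pose proof (peak_pos r n hr1).
  pose proof (margin_at_half _ (err r n) Hb ltac:(lra)).
  destruct (rho_Qc r hr1) as [Hrho _].
  assert (0 < offset r) by (unfold offset; pose proof (pos_INR r); lra).
  assert (peak r n * ((1 + err r n) * recip_sum (sqrt (2 ^ r)))
          < peak r n * (2 * sqrt (2 ^ r))) by (apply Rmult_lt_compat_l; lra).
  nra.
Qed.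

Lemma sqrt_eventually_ge (T : R) : exists N : nat, forall n : nat, (N <= n)%nat -> T <= sqrt (INR n).
Proof.
  destruct (archimed (T * T)) as [Hup _].
  assert (Hz : (0 <= up (T * T))%Z).
  { assert (Hlt : IZR (-1) < IZR (up (T * T))) by (simpl; nra).
    apply lt_IZR in Hlt. lia. }
  exists (Z.to_nat (up (T * T))). intros n hn.
  apply le_INR in hn. rewrite INR_IZR_INZ, Z2Nat.id in hn by exact Hz.
  apply Rle_trans with (Rabs T); [apply Rle_abs|].
  rewrite <- sqrt_Rsqr_abs. apply sqrt_le_1_alt. unfold Rsqr. lra.
Qed.

Lemma eventually_regime (r : nat) (eta sigma : R) : (1 <= r)%nat -> 0 < eta ->
  exists N : nat, forall n : nat, (N <= n)%nat ->
    (1 <= n)%nat /\ err r n <= eta /\ sigma <= peak r n /\ 0 <= Lstar r n.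
Proof.
  intros hr heta. destruct (rho_Qc r hr) as [Hrho _].
  pose proof (kappa_pos r) as Hk.
  assert (Hkr : 0 < rho r * kappa r ^ r) by (apply Rmult_lt_0_compat; [|apply pow_lt]; lra).
  assert (HB : 0 <= binom_err r) by (pose proof (binom_err_ge r hr); pose proof (pos_INR r); nra).
  set (T := 1 + 2 * binom_err r * kappa r / eta + Rabs sigma / (rho r * kappa r ^ r) + / kappa r).
  assert (HT1 : 0 <= 2 * binom_err r * kappa r / eta)
    by (apply Rmult_le_pos; [nra | left; apply Rinv_0_lt_compat; lra]).
  assert (HT2 : 0 <= Rabs sigma / (rho r * kappa r ^ r))
    by (apply Rmult_le_pos; [apply Rabs_pos | left; apply Rinv_0_lt_compat; lra]).
  assert (HT3 : 0 < / kappa r) by (apply Rinv_0_lt_compat; lra).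
  destruct (sqrt_eventually_ge T) as [N HN]. exists N. intros n hn.
  specialize (HN n hn). set (S := sqrt (INR n)) in *.
  assert (HS1 : 1 <= S) by (unfold T in HN; lra).
  assert (hn1 : (1 <= n)%nat) by (destruct n; [unfold S in HS1; change (INR 0) with 0 in HS1; rewrite sqrt_0 in HS1; lra | lia]).
  assert (HSS : S * S = INR n) by (apply sqrt_sqrt, pos_INR).
  assert (Hscale : scale r n = kappa r * S) by (apply scale_sqrt; exact hn1).
  split; [exact hn1|]. split; [|split].
  - (* [err = 2 binom_err kappa / S] *)
    assert (Herr : err r n = 2 * binom_err r * kappa r / S).
    { unfold err. rewrite Hscale, <- HSS. field. lra. }
    rewrite Herr. apply Rmult_le_reg_r with S; [lra|]. unfold Rdiv.
    rewrite Rmult_assoc, Rinv_l, Rmult_1_r by lra.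
    assert (2 * binom_err r * kappa r / eta * eta <= S * eta)
      by (apply Rmult_le_compat_r; unfold T in HN; lra).
    unfold Rdiv in H. rewrite Rmult_assoc, Rinv_l, Rmult_1_r in H by lra. lra.
  - (* [peak = rho kappa^r S^r >= rho kappa^r S >= |sigma|] *)
    unfold peak. rewrite Hscale, Rpow_mult_distr, <- Rmult_assoc.
    assert (HSr : S <= S ^ r) by (rewrite <- (pow_1 S) at 1; apply Rle_pow; [lra | lia]).
    assert (Rabs sigma / (rho r * kappa r ^ r) * (rho r * kappa r ^ r) <= S * (rho r * kappa r ^ r))
      by (apply Rmult_le_compat_r; unfold T in HN; lra).
    unfold Rdiv in H. rewrite Rmult_assoc, Rinv_l, Rmult_1_r in H by lra.
    pose proof (Rle_abs sigma). nra.
  - (* [P = kappa S >= 1], i.e. [2^Lstar >= 1] *)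
    assert (HP1 : 1 <= scale r n).
    { rewrite Hscale. assert (/ kappa r * kappa r <= S * kappa r)
        by (apply Rmult_le_compat_r; unfold T in HN; lra).
      rewrite Rinv_l in H by lra. lra. }
    apply Rnot_lt_le. intro Hneg. unfold scale in HP1.
    pose proof (Rpower_lt 2 _ _ ltac:(lra) Hneg). rewrite Rpower_O in H by lra. lra.
Qed.

Lemma K_eq (r : nat) : (1 <= r)%nat -> K r = 2 * rho r * kappa r ^ r.
Proof.
  intros hr. destruct (rho_Qc r hr) as [Hrho [HQ HrQ]].
  assert (Hf : 0 < INR (fact r)) by (apply lt_0_INR, lt_O_fact).
  assert (Hkr : 0 < kappa r ^ r) by (apply pow_lt, kappa_pos).
  unfold K. fold (rho r).
  replace (4 * rho r * / INR (fact r)) with ((2 * rho r * kappa r ^ r) * (2 * rho r * kappa r ^ r)).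
  - apply sqrt_square. nra.
  - replace ((2 * rho r * kappa r ^ r) * (2 * rho r * kappa r ^ r))
      with (4 * rho r * (rho r * kappa r ^ (2 * r))) by (rewrite Nat.mul_comm, pow_mult; ring).
    rewrite kappa_pow by exact hr.
    apply Rmult_eq_reg_r with (INR (fact r)); [|lra].
    replace (4 * rho r * (rho r * Qc r) * INR (fact r)) with (4 * rho r * (rho r * Qc r * INR (fact r)))
      by ring.
    rewrite HrQ. field. lra.
Qed.

Lemma K_peak (r n : nat) : (1 <= r)%nat -> (1 <= n)%nat ->
  K r * Rpower (INR n) (INR r / 2) = 2 * peak r n.
Proof.
  intros hr hn. assert (HnR : 0 < INR n) by (apply lt_0_INR; lia).
  replace (INR r / 2) with (/ 2 * INR r) by (unfold Rdiv; ring).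
  rewrite <- Rpower_mult, Rpower_sqrt, Rpower_pow by (try apply sqrt_lt_R0; lra).
  unfold peak. rewrite K_eq, scale_sqrt, Rpow_mult_distr by assumption. ring.
Qed.

Lemma optimum_location (r : nat) (hr : (2 <= r)%nat) (Lop : nat -> nat)
  (hLop : forall n : nat, (1 <= n)%nat -> is_Lop n r (Lop n)) :
  exists delta : nat -> R,
    Un_cv delta 0 /\
    forall n : nat, (1 <= n)%nat ->
      Lstar r n - / 2 - delta n <= INR (Lop n) <= Lstar r n + / 2 + delta n.
Proof.
  assert (hr1 : (1 <= r)%nat) by lia.
  exists (fun n => Rmax 0 (Rabs (INR (Lop n) - Lstar r n) - / 2)).
  split.
  2:{ intros n _. pose proof (Rmax_r 0 (Rabs (INR (Lop n) - Lstar r n) - / 2)).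
      pose proof (Rle_abs (INR (Lop n) - Lstar r n)).
      pose proof (Rle_abs (- (INR (Lop n) - Lstar r n))).
      rewrite Rabs_Ropp in *. lra. }
  intros eps heps.
  (* a tilt window [(1/u, u)] corresponding to distance [1/2 + eps/2] *)
  set (a := / 2 + eps / 2). set (u := Rpower 2 (INR r * a)).
  destruct (sqrt_pow2 r hr) as [Hb _].
  assert (HrR : 1 <= INR r) by (apply (le_INR 1); lia).
  assert (Hbu : sqrt (2 ^ r) < u).
  { rewrite <- Rpower2_half. apply Rpower_lt; [lra|]. unfold a. nra. }
  assert (Hf : recip_sum (sqrt (2 ^ r)) < recip_sum u) by (apply recip_sum_lt; lra).
  pose proof (recip_sum_ge2 (sqrt (2 ^ r)) ltac:(lra)).
  destruct (small_margin (recip_sum (sqrt (2 ^ r))) (recip_sum u) ltac:(lra))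
    as [eta [Heta Hmargin]].
  destruct (eventually_regime r eta 0 hr1 ltac:(lra)) as [N HN].
  exists N. intros n hn. destruct (HN n hn) as [hn1 [herr [_ HL]]].
  assert (Hwin := optimum_tilt_window r n (Lop n) eta u hr hn1
    (conj herr (proj2 Heta)) ltac:(lra) (hLop n hn1) ltac:(lra) Hmargin).
  pose proof (tilt_window_dist r n (Lop n) a hr1 Hwin).
  unfold R_dist. rewrite Rminus_0_r, Rabs_right by (apply Rle_ge, Rmax_l).
  apply Rmax_lub_lt; unfold a in *; lra.
Qed.

(** Second claim: [K_r n^{r/2} / sqrt(2^r) < G_2(L_op) < sqrt(2^r) K_r n^{r/2}]
    for large [n], since [K_r n^{r/2} = 2 peak] and [sqrt(2^r) >= 2]. *)
Lemma optimum_value (r : nat) (hr : (2 <= r)%nat) (Lop : nat -> nat)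
  (hLop : forall n : nat, (1 <= n)%nat -> is_Lop n r (Lop n)) :
  exists N : nat, forall n : nat, (N <= n)%nat ->
    / sqrt (2 ^ r) * K r * Rpower (INR n) (INR r / 2) < G2 n r (Lop n) /\
    G2 n r (Lop n) < sqrt (2 ^ r) * K r * Rpower (INR n) (INR r / 2).
Proof.
  assert (hr1 : (1 <= r)%nat) by lia.
  destruct (eventually_regime r (/ 4) (2 * offset r + 1) hr1 ltac:(lra)) as [N HN].
  exists N. intros n hn. destruct (HN n hn) as [hn1 [herr [Hpeak HL]]].
  rewrite !Rmult_assoc, (K_peak r n hr1 hn1).
  split; [|exact (optimum_upper r n (Lop n) hr hn1 herr ltac:(lra) (hLop n hn1))].
  pose proof (G2_lower_uniform r n (Lop n) hr1 hn1 herr).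
  destruct (sqrt_pow2 r hr) as [Hb _].
  assert (/ sqrt (2 ^ r) <= / 2) by (apply Rinv_le_contravar; lra).
  pose proof (peak_pos r n hr1).
  nra.
Qed.

Theorem theorem2 (r : nat) (hr : (2 <= r)%nat) (Lop : nat -> nat)
  (hLop : forall n : nat, (1 <= n)%nat -> is_Lop n r (Lop n)) :
  (exists delta : nat -> R,
      Un_cv delta 0 /\
      forall n : nat, (1 <= n)%nat ->
        Lstar r n - / 2 - delta n <= INR (Lop n) <= Lstar r n + / 2 + delta n)
  /\
  (exists N : nat, forall n : nat, (N <= n)%nat ->
      / sqrt (2 ^ r) * K r * Rpower (INR n) (INR r / 2) < G2 n r (Lop n) /\
      G2 n r (Lop n) < sqrt (2 ^ r) * K r * Rpower (INR n) (INR r / 2)).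
Proof.
  split.
  - exact (optimum_location r hr Lop hLop).
  - exact (optimum_value r hr Lop hLop).
Qed.
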